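(* In any run of multi-agent dual policy iteration (defined in the context), let $\pi_h$ and $\pi$ denote the joint safety policy and the joint task policy at the end of an outer iteration. Then $$\{x\in\mathcal X: V_h^{\pi}(x)\ge0\}=\{x\in\mathcal X: V_h^{\pi_h}(x)\ge0\}=S_{\rm c}^{\rm new}.$$ These sets are non-decreasing with respect to inclusion across outer iterations. If the joint safety policies converge to $\pi_h^*$ (e.g. under the tie-breaking convention, in which case they are eventually constant), these sets eventually equal $S_{\rm c}^*:=\{x: V_h^{\pi_h^*}(x)\ge0\}$.
   Context: Setting. Let $\mathcal N=\{1,\dots,n\}$ be a finite set of agents, $\mathcal X$ a finite state space, $\mathcal U_i$ a finite action set for agent $i$, $\mathcal U=\prod_{i=1}^n\mathcal U_i$ the joint action space, $f:\mathcal X\times\mathcal U\to\mathcal X$ the deterministic dynamics, $r:\mathcal X\times\mathcal U\to\mathbb R$ a reward, $h:\mathcal X\to\mathbb R$ a constraint function, and $\gamma,\gamma_h\in(0,1)$ discount factors. An individual policy of agent $i$ is a map $\pi_i:\mathcal X\to\mathcal U_i$. A joint policy is $\pi=(\pi_1,\dots,\pi_n)$, with $\pi(x)=(\pi_1(x),\dots,\pi_n(x))$. For a joint action $u$ and an agent $i$, $(u_i',u_{-i})$ denotes $u$ with its $i$-th component replaced by $u_i'$. Safety value function. For a joint policy $\pi$, set $V_h^{\pi}(x)=\min_{t\in\mathbb N}\gamma_h^{t+1}h(x_t)$, where $x_0=x$ and $x_{t+1}=f(x_t,\pi(x_t))$. Value function. Along the same trajectory, set $V^{\pi}(x)=\sum_{t\ge0}\gamma^t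 r(x_t,\pi(x_t))$. Controlled invariant set. $S_{\rm c}^{\pi}=\{x: V_h^{\pi}(x)\ge0\}$. Invariant action set. For a joint policy $\pi_h$, a state $x$, and actions $u_{-i}$ of the agents other than $i$, set $\mathcal U_i^{\pi_h}(x,u_{-i})=\{u_i\in\mathcal U_i: V_h^{\pi_h}(f(x,(u_i,u_{-i})))\ge0\}$. Safety update step. Given the current joint safety policy $\pi_h$ and an ordering $i_1,\dots,i_n$ of $\mathcal N$: for each $x$ and $j=1,\dots,n$ in turn, replace $\pi_{h,i_j}(x)$ by an element of $\arg\max_{v\in\mathcal U_{i_j}}V_h^{\pi_h^{\rm old}}(f(x,w))$. Here $V_h^{\pi_h^{\rm old}}$ is computed for the policy before this step, and $w$ has component $i_j$ equal to $v$, components of earlier agents equal to their already-updated actions, and components of later agents equal to their old actions. Multi-agent dual policy iteration. Start from an initial joint safety policy $\pi_h$, an arbitrary initial joint task policy $\pi$, and $S_{\rm c}=\varnothing$. Each outer iteration consists of: (1) apply the safety update step $K\ge1$ times to $\pi_h$; (2) compute $V^{\pi}$ for the current task policy $\pi$; (3) for every $x\in\mathcal X\setminus S_{\rm c}$, set $\pi(x)\leftarrow\pi_h(x)$; (4) set $S_{\rm c}^{\rm new}=S_{\rm c}^{\pi_h}$; (5) choose an ordering $i_1,\dots,i_n$. For each $x\in S_{\rm c}^{\rm new}$ and $j=1,\dots,n$ in turn, set $$\pi^{\rm new}_{i_j}(x)\in\arg\max_{v\in\mathcal U_{i_j}^{\pi_h}(x,w^{(j)}_{-i_j})}\Big\{r\big(x,(v,w^{(j)}_{-i_j})\big)+\gamma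 V^{\pi}\big(f(x,(v,w^{(j)}_{-i_j}))\big)\Big\},$$ where $w^{(j)}_{-i_j}$ gives agents $i_l$ with $l<j$ their new actions $\pi^{\rm new}_{i_l}(x)$ and agents $i_l$ with $l>j$ their actions under $\pi$ after step (3). For $x\notin S_{\rm c}^{\rm new}$, $\pi^{\rm new}(x)$ is $\pi(x)$ after step (3). Then set $\pi\leftarrow\pi^{\rm new}$; (6) set $S_{\rm c}\leftarrow S_{\rm c}^{\rm new}$. Tie-breaking convention. In every argmax, if the agent's current action is a maximizer, it is selected. Otherwise, a maximizer is selected by a fixed deterministic rule. *)

From HB Require Import structures.
From mathcomp Require Import all_boot all_order all_algebra all_fingroup.
From mathcomp Require Import all_classical all_reals all_analysis.
Set Implicit Arguments. Unset Strict Implicit. Unset Printing Implicit Defensive.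
Import Order.TTheory GRing.Theory Num.Theory.
Local Open Scope ring_scope.

Section MADPI.
Variables (R : realType) (n : nat) (X : finType) (U : 'I_n -> finType).

Definition jact := forall i : 'I_n, U i.
Definition jpol := X -> jact.

(* (v, u_{-i}) : u with its i-th component replaced by v *)
Definition upd (u : jact) (i : 'I_n) (v : U i) : jact :=
  fun j => match i =P j with
           | ReflectT e => eq_rect i U v j e
           | ReflectF _ => u j
           end.

Variables (f : X -> jact -> X) (r : X -> jact -> R) (h : X -> R).

Definition traj (pi : jpol) (x : X) (t : nat) : X :=
  iter t (fun y => f y (pi y)) x.

Definition Vh (gh : R) (pi : jpol) (x : X) : R :=
  inf (range (fun t : nat => gh ^+ t.+1 * h (traj pi x t))).

Definition Vr (g : R) (pi : jpol) (x : X) : R :=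
  limn (fun N : nat =>
          \sum_(0 <= t < N) (g ^+ t * r (traj pi x t) (pi (traj pi x t)))).

Definition Sc (gh : R) (pi : jpol) : {set X} := [set x | 0 <= Vh gh pi x].

Definition is_argmax (A : finType) (P : pred A) (F : A -> R) (a : A) : Prop :=
  P a /\ forall b, P b -> F b <= F a.

(* the context w^{(j)}: agents i_l (l < j) take their new actions, the others
   their old ones; the ordering is i_l = s l *)
Definition mixw (s : {perm 'I_n}) (j : 'I_n) (new old : jact) : jact :=
  fun i => if ((s^-1)%g i < j)%N then new i else old i.

Definition safety_step (gh : R) (s : {perm 'I_n}) (pih pih' : jpol) : Prop :=
  forall (x : X) (j : 'I_n),
    is_argmax predT
      (fun v : U (s j) => Vh gh pih (f x (upd (mixw s j (pih' x) (pih x)) v)))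
      (pih' x (s j)).

Definition outer_step (g gh : R) (K : nat)
    (pih pi : jpol) (S : {set X}) (pih' pi' : jpol) (S' : {set X}) : Prop :=
  (exists p : nat -> jpol,
      p 0%N = pih /\ p K = pih' /\
      forall m, (m < K)%N -> exists s, safety_step gh s (p m) (p m.+1)) /\
  (* (2),(3),(5): V^pi of the task policy before (3); pi3 = pi after (3) *)
  let pi3 : jpol := fun x => if x \in S then pi x else pih' x in
  S' = Sc gh pih' /\
  exists s : {perm 'I_n},
    forall x : X,
      (x \in S' ->
         forall j : 'I_n,
           is_argmax
             (fun v : U (s j) =>
                0 <= Vh gh pih' (f x (upd (mixw s j (pi' x) (pi3 x)) v)))
             (fun v : U (s j) =>
                r x (upd (mixw s j (pi' x) (pi3 x)) v)
                + g * Vr g pi (f x (upd (mixw s j (pi' x) (pi3 x)) v)))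
             (pi' x (s j))) /\
      (x \notin S' -> forall i, pi' x i = pi3 x i).

(* a run: pihs k, pis k, Ss k are the safety policy, task policy and S_c after
   k outer iterations (k = 0: initial values, S_c = empty) *)
Definition madpi_run (g gh : R) (K : nat)
    (pihs pis : nat -> jpol) (Ss : nat -> {set X}) : Prop :=
  Ss 0%N = finset.set0 /\
  forall k, outer_step g gh K (pihs k) (pis k) (Ss k)
                              (pihs k.+1) (pis k.+1) (Ss k.+1).

End MADPI.

From HB Require Import structures.
From mathcomp Require Import all_boot all_order all_algebra all_fingroup.
From mathcomp Require Import all_classical all_reals all_analysis.
Import Order.TTheory GRing.Theory Num.Theory.
Set Implicit Arguments. Unset Strict Implicit. Unset Printing Implicit Defensive.
Local Open Scope ring_scope.

(* Since 0 < gh <= 1, V_h^pi(x) >= 0 iff h stays nonnegative along the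
   pi-trajectory of x, so S_c^pi is the largest pi-invariant set on which
   h >= 0.  In a safety update each agent in turn maximises V_h^{old} at the
   successor state, so V_h^{old}(f(x, pi_h'(x))) >= V_h^{old}(f(x, pi_h(x))):
   S_c^{old} is invariant under the new policy, which gives monotonicity.
   The task policy is confined to S_c^{pi_h} by the invariant action sets and
   coincides with pi_h outside it; a state outside S_c^{pi_h} that is safe for
   the task policy would be safe for pi_h as well, because the task trajectory
   follows pi_h until it enters S_c^{pi_h}. *)

Section JointActions.
Variables (n : nat) (U : 'I_n -> finType).

Definition mixn (s : {perm 'I_n}) (m : nat) (new old : jact U) : jact U :=
  fun i => if ((s^-1)%g i < m)%N then new i else old i.

Lemma upd_id (u : jact U) (i : 'I_n) : upd u (u i) = u.
Proof.
apply: functional_extensionality_dep => k; rewrite /upd.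
by case: eqP => [e|//]; destruct e.
Qed.

Lemma upd_mixw (s : {perm 'I_n}) (j : 'I_n) (new old : jact U) :
  upd (mixw s j new old) (new (s j)) = mixn s j.+1 new old.
Proof.
apply: functional_extensionality_dep => k; rewrite /upd /mixw /mixn.
case: eqP => [e|ne]; first by destruct e; rewrite /= permK ltnSn.
have ne_rank : ((s^-1)%g k == j :> nat) = false.
  by apply/negbTE/eqP => /val_inj e; apply: ne; rewrite -e permKV.
by rewrite ltnS (leq_eqVlt ((s^-1)%g k)) ne_rank.
Qed.

Lemma mixn0 s (new old : jact U) : mixn s 0 new old = old.
Proof. by apply: functional_extensionality_dep => k; rewrite /mixn ltn0. Qed.

Lemma mixn_all s (new old : jact U) : mixn s n new old = new.
Proof. by apply: functional_extensionality_dep => k; rewrite /mixn ltn_ord. Qed.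

Lemma jact0_eq (u v : jact U) : n = 0%N -> u = v.
Proof.
move=> n0; apply: functional_extensionality_dep => i.
by have := ltn_ord i; rewrite {2}n0.
Qed.

End JointActions.

Section SafeSet.
Variables (R : realType) (n : nat) (X : finType) (U : 'I_n -> finType).
Variables (f : X -> jact U -> X) (r : X -> jact U -> R) (h : X -> R) (gh : R).

Lemma traj_succ (pi : jpol X U) x t : traj f pi (f x (pi x)) t = traj f pi x t.+1.
Proof. by rewrite /traj iterSr. Qed.

Lemma safety_step_Vh_le s (pih pih' : jpol X U) x :
  safety_step f h gh s pih pih' ->
  Vh f h gh pih (f x (pih x)) <= Vh f h gh pih (f x (pih' x)).
Proof.
move=> step; rewrite -(mixn_all s (pih' x) (pih x)).
suff prefix_le : forall m, (m <= n)%N ->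
  Vh f h gh pih (f x (pih x)) <= Vh f h gh pih (f x (mixn s m (pih' x) (pih x))).
  exact: prefix_le.
elim=> [_|m IH lt_mn]; first by rewrite mixn0.
apply: (le_trans (IH (ltnW lt_mn))).
have [_ best] := step x (Ordinal lt_mn).
set w := mixw s _ (pih' x) (pih x) in best.
by have := best (w (s (Ordinal lt_mn))) isT; rewrite upd_id upd_mixw.
Qed.

Hypotheses (gh_gt0 : 0 < gh) (gh_le1 : gh <= 1).

Lemma Vh_ge0P pi x : 0 <= Vh f h gh pi x <-> forall t, 0 <= h (traj f pi x t).
Proof.
rewrite /Vh; set E := range (fun t => _); split => [Vh_ge0 t|h_ge0].
- have E_lb : has_lbound E.
    exists (- \sum_y `|h y|) => _ [t' _ <-].
    suff : `|gh ^+ t'.+1 * h (traj f pi x t')| <= \sum_y `|h y|.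
      by rewrite ler_norml => /andP[].
    rewrite normrM normrX (ger0_norm (ltW gh_gt0)).
    apply: (le_trans (y := `|h (traj f pi x t')|)).
      by rewrite ler_piMl // exprn_ile1 // ltW.
    by rewrite (bigD1 (traj f pi x t')) //= lerDl sumr_ge0.
  have := le_trans Vh_ge0 (ge_inf E_lb (ex_intro2 _ _ t I erefl)).
  by rewrite pmulr_rge0 // exprn_gt0.
- apply: lb_le_inf; first by exists (gh ^+ 1 * h (traj f pi x 0)), 0%N.
  by move=> _ [t _ <-]; rewrite mulr_ge0 // exprn_ge0 // ltW.
Qed.

Lemma inScP pi x : reflect (forall t, 0 <= h (traj f pi x t)) (x \in Sc f h gh pi).
Proof. by rewrite inE; apply: (iffP idP) => /Vh_ge0P. Qed.

Lemma Sc_ge0 pi x : x \in Sc f h gh pi -> 0 <= h x.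
Proof. by move/inScP/(_ 0%N). Qed.

Lemma Sc_closed pi x : x \in Sc f h gh pi -> f x (pi x) \in Sc f h gh pi.
Proof. by move/inScP => safe; apply/inScP => t; rewrite traj_succ. Qed.

Lemma sub_Sc (pi : jpol X U) (S : {set X}) :
  {in S, forall x, 0 <= h x /\ f x (pi x) \in S} -> S \subset Sc f h gh pi.
Proof.
move=> invS; apply/fintype.subsetP => x xS; apply/inScP => t.
suff /invS[] : traj f pi x t \in S by [].
by elim: t => [//|t IH]; exact: (invS _ IH).2.
Qed.

Lemma safety_step_Sc_sub s pih pih' :
  safety_step f h gh s pih pih' -> Sc f h gh pih \subset Sc f h gh pih'.
Proof.
move=> step; apply: sub_Sc => x safe; split; first exact: Sc_ge0 safe.
rewrite inE (le_trans _ (safety_step_Vh_le x step)) //.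
by have := Sc_closed safe; rewrite inE.
Qed.

Lemma safety_steps_Sc_sub K (p : nat -> jpol X U) :
  (forall m, (m < K)%N -> exists s, safety_step f h gh s (p m) (p m.+1)) ->
  Sc f h gh (p 0%N) \subset Sc f h gh (p K).
Proof.
move=> steps; elim: K steps => [//|K IH steps].
apply: fintype.subset_trans (IH (fun m lt_mK => steps m (ltnW lt_mK))) _.
by have [s step] := steps K (ltnSn K); exact: safety_step_Sc_sub step.
Qed.

Lemma Sc_patch (pi pih : jpol X U) :
  {in [predC Sc f h gh pih], pi =1 pih} ->
  {in Sc f h gh pih, forall x, f x (pi x) \in Sc f h gh pih} ->
  Sc f h gh pi = Sc f h gh pih.
Proof.
move=> off_eq closed; apply/eqP; rewrite finset.eqEsubset; apply/andP; split; last first.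
  by apply: sub_Sc => x safe; split; [exact: Sc_ge0 safe | exact: closed].
apply/fintype.subsetP => x safe; apply/inScP => t; elim: t x safe => [|t IH] x safe.
  exact: Sc_ge0 safe.
have [safe_h|unsafe_h] := boolP (x \in Sc f h gh pih); first exact: inScP.
by rewrite -traj_succ -off_eq //; apply/IH/Sc_closed.
Qed.

Lemma outer_step_Sc_sub g K pih pi S pih' pi' S' :
  outer_step f r h g gh K pih pi S pih' pi' S' -> Sc f h gh pih \subset S'.
Proof.
by move=> [[p [<- [<- steps]]] [-> _]]; exact: safety_steps_Sc_sub.
Qed.

Lemma outer_step_task_Sc g K pih pi S pih' pi' S' :
  outer_step f r h g gh K pih pi S pih' pi' S' -> S \subset S' -> Sc f h gh pi' = S'.
Proof.
move=> [_ [-> [s task]]] sub; apply: Sc_patch => x.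
  rewrite inE => unsafe; apply: functional_extensionality_dep => i.
  rewrite (task x).2 //=; case: ifP => // xS.
  by rewrite (fintype.subsetP sub x xS) in unsafe.
move=> safe; have [n0|n_gt0] := posnP n.
  by rewrite (jact0_eq (pi' x) (pih' x) n0); exact: Sc_closed.
(* For the last agent in the ordering, the updated context is [pi' x] itself. *)
have last_lt : (n.-1 < n)%N by rewrite ltn_predL.
have [keeps_safe _] := (task x).1 safe (Ordinal last_lt).
by rewrite inE; move: keeps_safe; rewrite upd_mixw /= prednK // mixn_all.
Qed.

End SafeSet.

Theorem proposition3 (R : realType) (n : nat) (X : finType)
    (U : 'I_n -> finType) (f : X -> jact U -> X) (r : X -> jact U -> R)
    (h : X -> R) (g gh : R) (K : nat)
    (pihs pis : nat -> jpol X U) (Ss : nat -> {set X}) :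
  0 < g < 1 -> 0 < gh < 1 -> (1 <= K)%N ->
  madpi_run f r h g gh K pihs pis Ss ->
  (forall k : nat,
      Sc f h gh (pis k.+1) = Ss k.+1 /\ Sc f h gh (pihs k.+1) = Ss k.+1) /\
  (forall k : nat, Ss k.+1 \subset Ss k.+2) /\
  (forall pih_star : jpol X U,
      (exists N, forall k, (N <= k)%N -> forall x i, pihs k x i = pih_star x i) ->
      exists M, forall k, (M <= k)%N -> Ss k.+1 = Sc f h gh pih_star).
Proof.
move=> _ /andP[gh_gt0 /ltW gh_le1] _ [S0 run].
have Ss_Sc k : Ss k.+1 = Sc f h gh (pihs k.+1) by have [_ [-> _]] := run k.
have Ss_mono k : Ss k \subset Ss k.+1.
  case: k => [|k]; first by rewrite S0 finset.sub0set.
  by rewrite Ss_Sc; exact: outer_step_Sc_sub (run k.+1).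
split; [|split => //].
  move=> k; split; last by rewrite Ss_Sc.
  exact: (outer_step_task_Sc gh_gt0 gh_le1 (run k)) (Ss_mono k).
move=> pih_star [N pihs_eq]; exists N => k le_Nk.
rewrite Ss_Sc; congr Sc; apply: functional_extensionality_dep => x.
by apply: functional_extensionality_dep; apply: pihs_eq; rewrite leqW.
Qed.
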